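(* Let $\Gamma(V,E)$ be a finite undirected simple graph, let $V_1$ be the set of vertices of degree at least $1$, let $\Gamma^{(0)}=\Gamma(V\setminus V_1)$ be the induced subgraph on the isolated vertices, and let $\Gamma^{(1)},\dots,\Gamma^{(k)}$ be the connected components of the induced subgraph $\Gamma(V_1)$. For $i=0,1,\dots,k$ let $H^{(i)}=G_{\Gamma^{(i)}}\gamma_2(G_\Gamma)$, i.e. the subgroup of $G_\Gamma$ consisting of the elements $\prod_j (x^{(i)}_j)^{z_j}\prod_{l=1}^N y_l^{t_l}$ with $z_j,t_l\in\mathbb{Z}$, where $x^{(i)}_j$ runs over the vertices of $\Gamma^{(i)}$. Then for every automorphism $\varphi$ of $G_\Gamma$ there exists a unique permutation $\sigma\in S_k$ such that (i) $\varphi(H^{(i)})=H^{(\sigma(i))}$ for all $i=1,\dots,k$, and (ii) $\Gamma^{(i)}\cong\Gamma^{(\sigma(i))}$ for all $i=1,\dots,k$.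
   Context: For a finite undirected simple graph $\Gamma$ with vertex set $\{x_1,\dots,x_n\}$ and edge set $E$, the group $G_\Gamma$ is defined by the presentation with generators $x_1,\dots,x_n$ and $y_{i,j}$ for each pair $i<j$ with $x_ix_j\notin E$, and relations $[x_j,x_i]=1$ if $x_ix_j\in E$; $[x_j,x_i]=y_{i,j}$ if $x_ix_j\notin E$ and $i<j$; and $[x_l,y_{i,j}]=1$ for all $l$ and all such $y_{i,j}$. $N$ is the number of non-adjacent pairs, the $y_{i,j}$ are enumerated $y_1,\dots,y_N$, and $\gamma_2(G_\Gamma)=[G_\Gamma,G_\Gamma]$ is generated by them. $\Gamma(V')$ denotes the induced subgraph on $V'$, and for a subgraph $\Gamma'$ of $\Gamma$, $G_{\Gamma'}$ is viewed as the subgroup of $G_\Gamma$ generated by the vertices of $\Gamma'$. *)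

From mathcomp Require Import all_boot all_order all_algebra all_fingroup.
Set Implicit Arguments. Unset Strict Implicit. Unset Printing Implicit Defensive.
Import GRing.Theory.
Local Open Scope ring_scope.

(* A finite simple graph on the vertex set 'I_n = {x_0,...,x_(n-1)} is given by
   a symmetric irreflexive relation e : rel 'I_n (hypotheses in the theorem). *)

Section GGamma.
Variables (n : nat) (e : rel 'I_n).

(* non-adjacent pairs (i,j) with i < j : they index the generators y_{i,j} *)
Definition nadj (p : 'I_n * 'I_n) : bool := ((p.1 < p.2)%N && ~~ e p.1 p.2).
Definition Ypair := {p : 'I_n * 'I_n | nadj p}.

(* Concrete normal-form model of G_Gamma: the element
     x_0^(z 0) x_1^(z 1) ... x_(n-1)^(z (n-1)) * prod_p y_p^(t p)
   is represented by the pair (z, t).  With [a,b] = a^-1 b^-1 a b one has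
   x_j x_i = x_i x_j y_{i,j} (i<j, non-adjacent), x_j x_i = x_i x_j otherwise,
   y central; hence the multiplication below. *)
Definition GG := ({ffun 'I_n -> int} * {ffun Ypair -> int})%type.

Definition gmul (a b : GG) : GG :=
  ([ffun v => a.1 v + b.1 v],
   [ffun p : Ypair => a.2 p + b.2 p + a.1 (val p).2 * b.1 (val p).1]).

Definition is_aut (phi : GG -> GG) : Prop :=
  bijective phi /\ forall a b, phi (gmul a b) = gmul (phi a) (phi b).

(* H = G_{Gamma(A)} gamma_2(G_Gamma): elements whose x-exponents vanish off A *)
Definition Hsub (A : {set 'I_n}) (g : GG) : Prop :=
  forall v, v \notin A -> g.1 v = 0.

Definition img (phi : GG -> GG) (S : GG -> Prop) (g : GG) : Prop :=
  exists h, S h /\ phi h = g.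

Definition V1 : {set 'I_n} := [set x | [exists y, e x y]].

Definition e1 : rel 'I_n := fun x y => [&& e x y, x \in V1 & y \in V1].

Definition comps : {set {set 'I_n}} :=
  [set [set y | connect e1 x y] | x in V1].

Definition gcomp (i : 'I_#|comps|) : {set 'I_n} := enum_val i.

Definition graph_iso (A B : {set 'I_n}) : Prop :=
  exists f : 'I_n -> 'I_n,
    {in A &, injective f} /\ f @: A = B /\
    {in A &, forall x y, e (f x) (f y) = e x y}.

End GGamma.

Arguments gcomp {n} e i.
Arguments Hsub {n} e A g.
Arguments img {n e} phi S g.
Arguments comps {n} e.
Arguments graph_iso {n} e A B.

(* An automorphism phi of G_Gamma induces an automorphism f of the
   abelianisation Z^n, z |-> x-part of phi (z, 0), preserving commutation:
   two elements commute iff their x-parts u, w satisfy u_j w_i = w_j u_i on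
   every non-edge ij.  If v and w are adjacent, any p in the support of f x_v
   and q <> p in the support of f x_w are adjacent; hence f sends the span of
   each component Gamma^(i) into the span of a single component
   Gamma^(s i), and s is a permutation because f^-1 behaves alike.  A non-zero
   term of the Leibniz expansion of det f is a bijection pi of the vertices
   with (f x_v)_(pi v) <> 0; it maps Gamma^(i) into Gamma^(s i) and edges to
   edges, and so does the analogous bijection for f^-1, so comparing vertex
   and edge counts shows that pi is an isomorphism from Gamma^(i) onto
   Gamma^(s i). *)

From HB Require Import structures.
From mathcomp Require Import all_boot all_order all_algebra all_fingroup.
Set Implicit Arguments. Unset Strict Implicit. Unset Printing Implicit Defensive.
Import GRing.Theory.
Local Open Scope ring_scope.

Local Notation vec n := {ffun 'I_n -> int}.

Section IntVectors.
Variable T : finType.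

Definition delta (v : T) : {ffun T -> int} := [ffun x => (x == v)%:Z].

Lemma deltaE v x : delta v x = (x == v)%:Z.
Proof. by rewrite ffunE. Qed.

Lemma deltaxx v : delta v v = 1.
Proof. by rewrite deltaE eqxx. Qed.

Lemma delta_neq v x : x != v -> delta v x = 0.
Proof. by rewrite deltaE => /negbTE->. Qed.

Lemma delta_sum (z : {ffun T -> int}) : z = \sum_v delta v *~ z v.
Proof.
apply/ffunP => x; rewrite sum_ffunE (bigD1 x) //= big1 => [|y yx].
  by rewrite ffunMzE deltaxx mulrzz mul1r addr0.
by rewrite ffunMzE delta_neq ?mul0rz // eq_sym.
Qed.

Lemma raddf_coord (T' : finType)
    (h : {additive {ffun T -> int} -> {ffun T' -> int}}) z p :
  h z p = \sum_v z v * h (delta v) p.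
Proof.
rewrite {1}[z]delta_sum raddf_sum sum_ffunE; apply: eq_bigr => v _.
by rewrite raddfMz ffunMzE mulrzz mulrC.
Qed.

End IntVectors.

Lemma det_neq0_perm (R : comPzRingType) n (M : 'M[R]_n) :
  \det M != 0 -> exists s : 'S_n, forall i, M i (s i) != 0.
Proof.
case: (boolP [exists s : 'S_n, [forall i, M i (s i) != 0]]).
  by case/existsP => s /forallP Ms _; exists s.
move/existsPn => noperm /negP[]; rewrite /determinant big1 // => s _.
have /forallPn [i /negPn /eqP Mi0] := noperm s.
by rewrite (bigD1 i) //= Mi0 mul0r mulr0.
Qed.

Section Commutation.
Variables (n : nat) (e : rel 'I_n).
Hypothesis esym : symmetric e.

(* The y_(i,j)-coordinate of the commutator of two elements of G_Gamma with
   x-exponents u and w is u_j w_i - w_j u_i. *)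
Definition vcomm (u w : vec n) : Prop :=
  forall i j, ~~ e i j -> u j * w i = w j * u i.

Lemma vcomm_sym u w : vcomm u w -> vcomm w u.
Proof. by move=> uw i j /uw ->. Qed.

Lemma vcomm_comb u w c d : vcomm u w -> vcomm u (u *~ c - w *~ d).
Proof.
move=> uw i j nij; rewrite !ffunE !ffunMzE !mulrzz !mulrBr !mulrBl.
by congr (_ - _); rewrite mulrA ?uw // mulrAC.
Qed.

Lemma gmulC_vcommP (a b : GG e) : gmul a b = gmul b a <-> vcomm a.1 b.1.
Proof.
split=> ab.
- have key (i j : 'I_n) : (i < j)%N -> ~~ e i j -> a.1 j * b.1 i = b.1 j * a.1 i.
    move=> lij nij; have pij : nadj e (i, j) by rewrite /nadj /= lij.
    have := congr1 (fun c : GG e => c.2 (exist _ (i, j) pij : Ypair e)) ab.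
    by rewrite /= !ffunE /= [b.2 _ + _]addrC => /addrI.
  move=> i j nij; case: (ltngtP i j) => [lij | lji | /val_inj ->].
  + exact: key.
  + by rewrite mulrC [RHS]mulrC (key j i) // esym.
  + exact: mulrC.
- congr (_, _); apply/ffunP.
    by move=> v; rewrite !ffunE addrC.
  case=> [[i j] pij]; have /andP[_ /= nij] := pij; rewrite !ffunE /=.
  by rewrite ab // [a.2 _ + _]addrC.
Qed.

Definition nbhd_supp (p : 'I_n) (u : vec n) : Prop :=
  forall j, j != p -> ~~ e p j -> u j = 0.

Lemma vcomm_deltaP p u : vcomm (delta p) u <-> nbhd_supp p u.
Proof.
split=> [c j jp npj | s i j].
  by have := c p j npj; rewrite deltaxx delta_neq // mul0r mulr1.
rewrite !deltaE; have [-> | jp] := eqVneq j p; have [-> | ip] := eqVneq i p;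
  rewrite ?mul1r ?mulr1 ?mul0r ?mulr0 // => nij.
- by rewrite s // esym.
- by rewrite s.
Qed.

Lemma vcomm_nbhd_supp0 y z p :
  vcomm y z -> z p != 0 -> y p = 0 -> nbhd_supp p y.
Proof.
move=> yz zp yp j jp npj; move: (yz p j npj); rewrite yp mulr0 => /eqP.
by rewrite mulf_eq0 (negbTE zp) orbF => /eqP.
Qed.

Lemma vcomm_nbhd_supp y z p :
  vcomm y z -> z p != 0 -> nbhd_supp p z -> nbhd_supp p y.
Proof.
move=> yz zp zN j jp npj; move: (yz p j npj); rewrite (zN j) // mul0r => /eqP.
by rewrite mulf_eq0 (negbTE zp) orbF => /eqP.
Qed.

Lemma vcomm_delta_edge v w : e v w -> vcomm (delta v) (delta w).
Proof.
move=> evw; apply/vcomm_deltaP => j _ nvj.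
by rewrite delta_neq //; apply: contraNneq nvj => ->.
Qed.

End Commutation.

Section Components.
Variables (n : nat) (e : rel 'I_n).
Hypothesis esym : symmetric e.

Lemma e1_sym : symmetric (e1 e).
Proof. by move=> x y; rewrite /e1 esym [(x \in _) && _]andbC. Qed.

Lemma edge_V1 x y : e x y -> x \in V1 e.
Proof. by move=> exy; rewrite inE; apply/existsP; exists y. Qed.

Lemma e1_edge x y : e x y -> e1 e x y.
Proof. by move=> exy; rewrite /e1 exy (edge_V1 exy) (@edge_V1 y x) // esym. Qed.

Lemma gcompP i : exists2 x, x \in V1 e & gcomp e i = [set y | connect (e1 e) x y].
Proof. by rewrite /gcomp; have /imsetP[x xV ->] := enum_valP i; exists x. Qed.

Lemma gcomp_of x : x \in V1 e -> exists i, gcomp e i = [set y | connect (e1 e) x y].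
Proof.
move=> xV; have Cx : [set y | connect (e1 e) x y] \in comps e by apply: imset_f.
by exists (enum_rank_in Cx [set y | connect (e1 e) x y]); rewrite /gcomp enum_rankK_in.
Qed.

Lemma gcompN0 i : gcomp e i != set0.
Proof. by apply/set0Pn; have [x _ ->] := gcompP i; exists x; rewrite inE connect0. Qed.

Lemma gcomp_mem_eq i j x : x \in gcomp e i -> x \in gcomp e j -> i = j.
Proof.
have [xi _ Ei] := gcompP i; have [xj _ Ej] := gcompP j.
rewrite Ei Ej !inE => ci cj; apply: enum_val_inj; apply/setP => y.
rewrite -[enum_val i]/(gcomp e i) -[enum_val j]/(gcomp e j) Ei Ej !inE.
have cs := sym_connect_sym e1_sym.
by rewrite (same_connect cs ci) (same_connect cs cj).
Qed.

Lemma Hsub_gcomp_inj i j :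
  (forall g, Hsub e (gcomp e i) g <-> Hsub e (gcomp e j) g) -> i = j.
Proof.
move=> Hij; have /set0Pn [x xi] := gcompN0 i.
have /Hij xH : Hsub e (gcomp e i) (delta x, 0).
  by move=> v vi; rewrite /= delta_neq //; apply: contraNneq vi => ->.
apply: gcomp_mem_eq xi _; apply: contraT => /xH.
by rewrite /= deltaxx.
Qed.

End Components.

Section Embeddings.
Variables (n : nat) (e : rel 'I_n).

Definition edges (A : {set 'I_n}) : {set 'I_n * 'I_n} :=
  [set xy | [&& xy.1 \in A, xy.2 \in A & e xy.1 xy.2]].

Definition edge_embedding (h : 'I_n -> 'I_n) (A B : {set 'I_n}) : Prop :=
  [/\ {in A &, injective h}, h @: A \subset B
    & {in A &, forall x y, e x y -> e (h x) (h y)}].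

Lemma edges_imset h A B : edge_embedding h A B ->
  [set (h xy.1, h xy.2) | xy in edges A] \subset edges B
  /\ #|[set (h xy.1, h xy.2) | xy in edges A]| = #|edges A|.
Proof.
case=> hinj /subsetP hAB he; split.
  apply/subsetP => _ /imsetP[[x y] + ->]; rewrite !inE /= => /and3P[xA yA exy].
  by rewrite !hAB ?imset_f ?he.
apply: card_in_imset => -[x1 y1] [x2 y2]; rewrite !inE /=.
by case/and3P=> x1A y1A _ /and3P[x2A y2A _] [/hinj-> // /hinj->].
Qed.

Lemma graph_iso_of_embeddings h h' A B :
  edge_embedding h A B -> edge_embedding h' B A -> graph_iso e A B.
Proof.
move=> hAB h'BA; have [hinj hsub he] := hAB; have [h'inj h'sub _] := h'BA.
have himg : h @: A = B.
  apply/eqP; rewrite eqEcard hsub (card_in_imset hinj).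
  by rewrite -(card_in_imset h'inj) subset_leq_card.
have [hE hEcard] := edges_imset hAB; have [h'E h'Ecard] := edges_imset h'BA.
have Eimg : [set (h xy.1, h xy.2) | xy in edges A] = edges B.
  apply/eqP; rewrite eqEcard hE hEcard.
  by rewrite -h'Ecard subset_leq_card.
exists h; split=> //; split=> // x y xA yA; apply/idP/idP; last exact: he.
move=> ehxy; have : (h x, h y) \in edges B by rewrite inE /= ehxy -himg !imset_f.
rewrite -Eimg => /imsetP[[x' y']]; rewrite inE /= => /and3P[x'A y'A ex'y'] [].
by move=> /hinj-> // /hinj->.
Qed.

End Embeddings.

Section SupportMaps.
Variable n : nat.

Definition maps_into (h : vec n -> vec n) (A B : {set 'I_n}) : bool :=
  [forall v in A, forall p, (h (delta v) p != 0) ==> (p \in B)].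

Lemma maps_intoP (h : vec n -> vec n) (A B : {set 'I_n}) :
  reflect (forall v p, v \in A -> h (delta v) p != 0 -> p \in B) (maps_into h A B).
Proof.
apply: (iffP forall_inP) => [hAB v p /hAB /forallP /(_ p) /implyP // | hAB v vA].
by apply/forallP => p; apply/implyP; apply: hAB.
Qed.

Lemma maps_into_vanish (h : {additive vec n -> vec n}) A B (z : vec n) :
  maps_into h A B -> (forall v, v \notin A -> z v = 0) ->
  forall p, p \notin B -> h z p = 0.
Proof.
move=> /maps_intoP hAB zA p pB; rewrite raddf_coord big1 // => v _.
have [vA | /zA -> ] := boolP (v \in A); last by rewrite mul0r.
have /eqP -> : h (delta v) p == 0 by apply: contraNT pB; apply: hAB.
by rewrite mulr0.
Qed.

End SupportMaps.

Section CommPreserving.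
Variables (n : nat) (e : rel 'I_n).
Hypotheses (esym : symmetric e) (eirr : irreflexive e).

Variables f g : {additive vec n -> vec n}.
Hypotheses (fK : cancel f g) (gK : cancel g f).
Hypotheses (fC : forall u w, vcomm e u w -> vcomm e (f u) (f w))
           (gC : forall u w, vcomm e u w -> vcomm e (g u) (g w)).

Lemma supp_perm : exists s : 'S_n, forall v, f (delta v) (s v) != 0.
Proof.
pose M := \matrix_(v, p) f (delta v) p; pose N := \matrix_(p, x) g (delta p) x.
have MN : M *m N = 1%:M.
  apply/matrixP => v x; rewrite !mxE natz eq_sym -deltaE -{1}(fK (delta v)).
  by rewrite raddf_coord; apply: eq_bigr => p _; rewrite !mxE.
have detM : \det M != 0.
  have := congr1 determinant MN; rewrite det_mulmx det1.
  by apply: contra_eqN => /eqP->; rewrite mul0r eq_sym oner_eq0.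
by have [s Ms] := det_neq0_perm detM; exists s => v; have := Ms v; rewrite mxE.
Qed.

Lemma supp_exists v : exists p, f (delta v) p != 0.
Proof. by have [s sP] := supp_perm; exists (s v). Qed.

Lemma supp_edge v w p q : e v w ->
  f (delta v) p != 0 -> f (delta w) q != 0 -> p != q -> e p q.
Proof.
move=> evw; set a := f (delta v); set b := f (delta w) => ap bq pq.
apply/negPn/negP => npq; have vw : v != w by apply: contraTneq evw => ->; rewrite eirr.
have ab : vcomm e a b := fC (vcomm_delta_edge esym evw).
have abpq := ab p q npq.
have aq : a q != 0.
  by apply: contraNneq (mulf_neq0 bq ap) => aq0; rewrite -abpq aq0 mul0r.
have bp : b p != 0.
  by apply: contraNneq (mulf_neq0 bq ap) => bp0; rewrite -abpq bp0 mulr0.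
(* u commutes with x_p; pulling back by g and pushing forward by f shows that
   a commutes with x_p too, whence a_q = 0. *)
pose u := a *~ b p - b *~ a p.
have up : u p = 0 by rewrite !ffunE !ffunMzE !mulrzz mulrC subrr.
have uN : nbhd_supp e p u := vcomm_nbhd_supp0 (vcomm_sym (vcomm_comb _ _ ab)) ap up.
have gu : g u = delta v *~ b p - delta w *~ a p by rewrite raddfB !(raddfMz g) !fK.
have guN : nbhd_supp e v (g u).
  move=> j jv nvj; have jw : j != w by apply: contraNneq nvj => ->.
  by rewrite gu !ffunE !ffunMzE !delta_neq // !mul0rz subrr.
have guv : g u v != 0.
  by rewrite gu !ffunE !ffunMzE deltaxx delta_neq // mul0rz subr0 mulrzz mul1r.
have gpN := vcomm_nbhd_supp (gC ((vcomm_deltaP esym p u).2 uN)) guv guN.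
have := fC ((vcomm_deltaP esym v _).2 gpN); rewrite gK -/a.
move=> /vcomm_sym /(vcomm_deltaP esym) /(_ q); rewrite eq_sym pq => /(_ isT npq).
by move/eqP; rewrite (negbTE aq).
Qed.

Lemma supp_V1 v p : v \in V1 e -> f (delta v) p != 0 -> p \in V1 e.
Proof.
rewrite inE => /existsP[w evw] ap.
have vw : v != w by apply: contraTneq evw => ->; rewrite eirr.
have [q bq] := supp_exists w.
have pV1 r : e p r -> p \in V1 e := @edge_V1 _ _ p r.
have [qp | qp] := eqVneq q p; last first.
  by apply: (pV1 q); apply: supp_edge evw ap bq _; rewrite eq_sym.
subst q; pose other r := (r != p) && ((f (delta v) r != 0) || (f (delta w) r != 0)).
have [r /andP[rp /orP[ar | br]] | none] := pickP other.
- by apply: (pV1 r); rewrite esym; apply: supp_edge evw ar bq rp.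
- by apply: (pV1 r); apply: supp_edge evw ap br _; rewrite eq_sym.
(* Otherwise f (delta v) and f (delta w) are both multiples of delta p,
   which contradicts the injectivity of f. *)
have ab0 : f (delta v) *~ f (delta w) p - f (delta w) *~ f (delta v) p = 0.
  apply/ffunP => r; rewrite !ffunE !ffunMzE !mulrzz.
  have [-> | rp] := eqVneq r p; first by rewrite mulrC subrr.
  have /negbT := none r; rewrite /other rp negb_or !negbK => /andP[/eqP-> /eqP->].
  by rewrite !mul0r subrr.
have := congr1 (fun z => g z v) ab0; rewrite raddfB !(raddfMz g) !fK raddf0.
rewrite !ffunE !ffunMzE deltaxx delta_neq // mul0rz subr0 mulrzz mul1r => /eqP.
by rewrite (negbTE bq).
Qed.

Lemma supp_connect_edge v w p q : e v w ->
  f (delta v) p != 0 -> f (delta w) q != 0 -> connect (e1 e) p q.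
Proof.
move=> evw ap bq; have [-> // | pq] := eqVneq p q.
exact/connect1/(e1_edge esym)/(supp_edge evw ap bq pq).
Qed.

Lemma supp_connect v w p q : v \in V1 e -> connect (e1 e) v w ->
  f (delta v) p != 0 -> f (delta w) q != 0 -> connect (e1 e) p q.
Proof.
move=> vV1 cvw ap.
pose P := [pred x | [forall r, (f (delta x) r != 0) ==> connect (e1 e) p r]].
have step x y : e1 e x y -> x \in P -> y \in P.
  case/and3P=> exy _ _ /forallP Px; apply/forallP => r; apply/implyP => yr.
  have [t xt] := supp_exists x.
  exact: connect_trans (implyP (Px t) xt) (supp_connect_edge exy xt yr).
have closedP : closed (e1 e) P.
  by move=> x y exy; apply/idP/idP; apply: step; rewrite // e1_sym.
have Pv : v \in P.
  move: vV1; rewrite inE => /existsP[y evy]; have [t yt] := supp_exists y.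
  apply/forallP => r; apply/implyP => vr.
  apply: connect_trans (supp_connect_edge evy ap yt) _.
  by rewrite (sym_connect_sym (e1_sym esym)); apply: supp_connect_edge evy vr yt.
by rewrite (closed_connect closedP cvw) in Pv; move/forallP/(_ q)/implyP: Pv.
Qed.

Lemma maps_into_gcomp i : exists j, maps_into f (gcomp e i) (gcomp e j).
Proof.
have [x xV1 Ei] := gcompP i; have [p xp] := supp_exists x.
have [j Ej] := gcomp_of (supp_V1 xV1 xp); exists j.
apply/maps_intoP => v q; rewrite Ei Ej !inE => cxv vq.
exact: supp_connect xV1 cxv xp vq.
Qed.

Definition comp_map i := odflt i [pick j | maps_into f (gcomp e i) (gcomp e j)].

Lemma comp_mapP i : maps_into f (gcomp e i) (gcomp e (comp_map i)).
Proof.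
rewrite /comp_map; case: pickP => [j // | none].
by have [j] := maps_into_gcomp i; rewrite none.
Qed.

Lemma maps_into_gcomp_inv i j k :
  maps_into f (gcomp e i) (gcomp e j) -> maps_into g (gcomp e j) (gcomp e k) ->
  i = k.
Proof.
move=> /maps_intoP fij /maps_intoP gjk; have /set0Pn[x xi] := gcompN0 i.
have [p xp px] : exists2 p, f (delta x) p != 0 & g (delta p) x != 0.
  have : g (f (delta x)) x != 0 by rewrite fK deltaxx oner_eq0.
  rewrite raddf_coord; case: (pickP [pred p | f (delta x) p * g (delta p) x != 0]).
    by move=> p /=; rewrite mulf_eq0 negb_or => /andP[]; exists p.
  by move=> none; rewrite big1 ?eqxx // => p _; apply/eqP/negbFE/none.
exact: (gcomp_mem_eq esym xi (gjk p x (fij x p xi xp) px)).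
Qed.

Lemma supp_perm_embedding (s : 'S_n) A B :
  (forall v, f (delta v) (s v) != 0) -> maps_into f A B -> edge_embedding e s A B.
Proof.
move=> sP /maps_intoP fAB; split.
- exact: in2W perm_inj.
- by apply/subsetP => _ /imsetP[v vA ->]; apply: fAB vA (sP v).
- move=> v w _ _ evw; have vw : v != w by apply: contraTneq evw => ->; rewrite eirr.
  by apply: supp_edge evw (sP v) (sP w) _; rewrite (inj_eq perm_inj).
Qed.

End CommPreserving.

Arguments comp_map {n} e f i.

Section ComponentPermutation.
Variables (n : nat) (e : rel 'I_n).
Hypotheses (esym : symmetric e) (eirr : irreflexive e).

Variables f g : {additive vec n -> vec n}.
Hypotheses (fK : cancel f g) (gK : cancel g f).
Hypotheses (fC : forall u w, vcomm e u w -> vcomm e (f u) (f w))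
           (gC : forall u w, vcomm e u w -> vcomm e (g u) (g w)).

Let fP := comp_mapP esym eirr fK gK fC gC.
Let gP := comp_mapP esym eirr gK fK gC fC.

Lemma comp_mapK : cancel (comp_map e f) (comp_map e g).
Proof. by move=> i; symmetry; apply: (maps_into_gcomp_inv esym fK (fP i) (gP _)). Qed.

Lemma maps_into_comp_map_inv i : maps_into g (gcomp e (comp_map e f i)) (gcomp e i).
Proof. by rewrite -{2}[i]comp_mapK; apply: gP. Qed.

Lemma comp_map_iso i : graph_iso e (gcomp e i) (gcomp e (comp_map e f i)).
Proof.
have [s sP] := supp_perm fK; have [t tP] := supp_perm gK.
apply: graph_iso_of_embeddings.
- exact: (supp_perm_embedding esym eirr fK gK fC gC sP (fP i)).
- exact: (supp_perm_embedding esym eirr gK fK gC fC tP (maps_into_comp_map_inv i)).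
Qed.

End ComponentPermutation.

Section Abelianization.
Variables (n : nat) (e : rel 'I_n).
Hypothesis esym : symmetric e.

Variable phi : GG e -> GG e.
Hypothesis phiM : {morph phi : a b / gmul a b}.

Definition abel (z : vec n) : vec n := (phi (z, 0)).1.

Lemma phi_fstM a b : (phi (gmul a b)).1 = (phi a).1 + (phi b).1.
Proof. by rewrite phiM. Qed.

(* y_(i,j) is the commutator [x_j, x_i], so its image has trivial x-part. *)
Lemma phi_fst_ydelta (q : Ypair e) : (phi (0, delta q)).1 = 0.
Proof.
case: q => [[i j] pij]; have /andP[/= lij _] := pij.
pose x k : GG e := (delta k, 0).
have yji :
    gmul (x j) (x i) = gmul (0, delta (exist _ (i, j) pij)) (gmul (x i) (x j)).
  congr (_, _); apply/ffunP.
    by move=> k; rewrite !ffunE add0r addrC.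
  case=> [[a b] pab]; have /andP[/= lab _] := pab; rewrite !ffunE /=.
  have -> : (exist _ (a, b) pab == exist _ (i, j) pij :> Ypair e)
            = (a == i) && (b == j).
    by rewrite -val_eqE /= xpair_eqE.
  have : ~~ ((b == i) && (a == j)).
    apply/andP => -[/eqP bi /eqP aj]; move: lab; rewrite bi aj.
    by move=> /ltn_trans/(_ lij); rewrite ltnn.
  by case: (a == i); case: (b == j); case: (b == i); case: (a == j).
have := congr1 (fun c => (phi c).1) yji; rewrite /= !phi_fstM => yji1.
by apply: (addIr ((phi (x i)).1 + (phi (x j)).1)); rewrite add0r -yji1 addrC.
Qed.

Lemma phi_fst_y (t : {ffun Ypair e -> int}) : (phi (0, t)).1 = 0.
Proof.
pose h t : vec n := (phi (0, t)).1.
have hD : {morph h : t1 t2 / t1 + t2}.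
  move=> t1 t2; rewrite /h -phi_fstM; congr (phi _).1.
  by congr (_, _); apply/ffunP => q; rewrite !ffunE ?addr0 ?mulr0.
have h0 : h 0 = 0 by apply: (@addrI _ (h 0)); rewrite -hD !addr0.
pose hA : {additive _ -> vec n} :=
  HB.pack h (GRing.isNmodMorphism.Build _ _ h (h0, hD)).
apply/ffunP => v; rewrite -[LHS]/(hA t v) raddf_coord ffunE big1 // => q _.
by rewrite (phi_fst_ydelta q : hA (delta q) = 0) ffunE mulr0.
Qed.

Lemma phi_fst a : (phi a).1 = abel a.1.
Proof.
have aE : a = gmul (a.1, 0) (0, a.2).
  case: a => z t; congr (_, _); apply/ffunP => q /=;
    by rewrite ?ffunE ?add0r ?mulr0 ?addr0.
by rewrite {1}aE phi_fstM phi_fst_y addr0.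
Qed.

Lemma abel_nmod_morphism : nmod_morphism abel.
Proof.
split; first exact: phi_fst_y.
by move=> z w; rewrite /abel -phi_fstM [RHS]phi_fst.
Qed.

Definition abel_additive : {additive vec n -> vec n} :=
  HB.pack abel (GRing.isNmodMorphism.Build _ _ abel abel_nmod_morphism).

Lemma abel_vcomm u w : vcomm e u w -> vcomm e (abel u) (abel w).
Proof.
move=> uw; rewrite /abel; apply/(gmulC_vcommP esym); rewrite -!phiM.
by congr phi; apply/(gmulC_vcommP esym).
Qed.

End Abelianization.

Section Automorphism.
Variables (n : nat) (e : rel 'I_n).
Hypotheses (esym : symmetric e) (eirr : irreflexive e).
Variables phi psi : GG e -> GG e.
Hypotheses (phiM : {morph phi : a b / gmul a b}) (phiK : cancel phi psi)
           (psiK : cancel psi phi).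

Lemma psiM : {morph psi : a b / gmul a b}.
Proof. by move=> a b; apply: (can_inj phiK); rewrite phiM !psiK. Qed.

Let f := abel_additive phiM.
Let g := abel_additive psiM.

Lemma abelK : cancel f g.
Proof.
move=> z; apply: sym_eq; have := phi_fst psiM (phi (z, 0)).
by rewrite phiK; apply: id.
Qed.

Lemma abelVK : cancel g f.
Proof.
move=> z; apply: sym_eq; have := phi_fst phiM (psi (z, 0)).
by rewrite psiK; apply: id.
Qed.

Let fC := abel_vcomm esym phiM.
Let gC := abel_vcomm esym psiM.
Let fP := comp_mapP esym eirr abelK abelVK fC gC.
Let fPV := maps_into_comp_map_inv esym eirr abelK abelVK fC gC.

Definition comp_perm : {perm 'I_#|comps e|} :=
  perm (can_inj (comp_mapK esym eirr abelK abelVK fC gC)).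

Lemma comp_perm_img i h :
  img phi (Hsub e (gcomp e i)) h <-> Hsub e (gcomp e (comp_perm i)) h.
Proof.
rewrite permE; split=> [[a [aH <-]] p | hH].
  by rewrite (phi_fst phiM); apply: (maps_into_vanish (fP i)).
exists (psi h); split; last exact: psiK.
by move=> v; rewrite (phi_fst psiM); apply: (maps_into_vanish (fPV i)).
Qed.

Lemma comp_perm_iso i : graph_iso e (gcomp e i) (gcomp e (comp_perm i)).
Proof. by rewrite permE; apply: (comp_map_iso esym eirr abelK abelVK fC gC). Qed.

End Automorphism.

Theorem corollary6p2 (n : nat) (e : rel 'I_n)
  (esym : symmetric e) (eirr : irreflexive e)
  (phi : GG e -> GG e) (hphi : is_aut phi) :
  exists! s : {perm 'I_#|comps e|},
    forall i : 'I_#|comps e|,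
      (forall g, img phi (Hsub e (gcomp e i)) g <-> Hsub e (gcomp e (s i)) g) /\
      graph_iso e (gcomp e i) (gcomp e (s i)).
Proof.
case: hphi => [[psi phiK psiK] phiM].
exists (comp_perm esym eirr phiM phiK psiK); split=> [i | s sP].
  by split; [apply: comp_perm_img | apply: comp_perm_iso].
apply/permP => i; apply: (Hsub_gcomp_inj esym) => h.
have := comp_perm_img esym eirr phiM phiK psiK i h.
by have := (sP i).1 h; tauto.
Qed.
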